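(* Consider a Behavioral Security Game on an attack graph in which the attack success probability on each edge is $p_{i,j}(x_{i,j})=e^{-x_{i,j}}$, and let $B=\sum_{D_k\in\mathcal{D}}B_k$ be the sum of the budgets of all defenders. Then for any attack graph and any profile of behavioral levels $\{\alpha_k\}$ with $\alpha_k\in(0,1]$, the Price of Behavioral Anarchy satisfies $PoBA\le\exp(B)$.
   Context: An attack graph is a finite directed graph $G=(V,\mathcal{E})$ with source node $v_s$; $\mathcal{P}_m$ is the set of directed paths from $v_s$ to $v_m$ (as sets of edges); assets are reachable from $v_s$. Each defender $D_k\in\mathcal{D}$ owns assets $V_k\subseteq V\setminus\{v_s\}$ with losses $L_m\ge0$, has budget $B_k\ge0$ and strategy set $X_k=\{x_k\in\mathbb{R}^{|\mathcal{E}|}_{\ge0}:\mathbf{1}^Tx_k\le B_k\}$; the total investment on edge $(v_i,v_j)$ is $x_{i,j}=\sum_k x^k_{i,j}$. Defender $D_k$'s perceived cost is $C_k(x_k,\mathbf{x}_{-k})=\sum_{v_m\in V_k}L_m\max_{P\in\mathcal{P}_m}\prod_{(v_i,v_j)\in P}w_k(p_{i,j}(x_{i,j}))$ with Prelec weighting $w_k(p)=\exp[-(-\log p)^{\alpha_k}]$, and her true expected cost $\hat C_k$ is the same expression with $w_k$ replaced by the identity. Let $\hat C(\mathbf{x})=\sum_{D_k}\hat C_k(\mathbf{x})$. Let $X^{NE}$ be the set of pure Nash equilibria, i.e., profiles $\bar{\mathbf{x}}$ with $\bar x_k\in\arg\min_{x\in X_k}C_k(x,\bar{\mathbf{x}}_{-k})$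 for all $D_k$. Let $X^{Soc}=\{\mathbf{x}\in\mathbb{R}^{|\mathcal{D}||\mathcal{E}|}_{\ge0}:\mathbf{1}^T\mathbf{x}\le\sum_kB_k\}$ and $\mathbf{x}^*\in\arg\min_{\mathbf{x}\in X^{Soc}}\hat C(\mathbf{x})$. The Price of Behavioral Anarchy is $PoBA=\sup_{\bar{\mathbf{x}}\in X^{NE}}\hat C(\bar{\mathbf{x}})/\hat C(\mathbf{x}^* )$. *)

From HB Require Import structures.
From mathcomp Require Import all_boot all_order all_algebra.
From mathcomp Require Import all_classical all_reals all_analysis.
Set Implicit Arguments. Unset Strict Implicit. Unset Printing Implicit Defensive.
Import Order.TTheory GRing.Theory Num.Theory.
Local Open Scope ring_scope.

Definition is_pathb (V E : finType) (src tgt : E -> V) (vs vm : V) (s : seq E)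
  : bool :=
  match s with
  | [::] => false
  | e :: s' => [&& src e == vs, path (fun a b => tgt a == src b) e s',
                  tgt (last e s') == vm & uniq (vs :: map tgt s)]
  end.

(* P_m : the set of directed paths from vs to vm, each as a set of edges.
   A simple path has fewer than #|V| edges, so the quantification is finite. *)
Definition paths (V E : finType) (src tgt : E -> V) (vs vm : V)
  : {set {set E}} :=
  [set P : {set E} | [exists n : 'I_#|V|, exists t : n.-tuple E,
      is_pathb src tgt vs vm t && (P == [set e in t])]].

(* max over P in Ps of prod_{e in P} f e (all values used are >= 0). *)
Definition pathmax (R : realDomainType) (E : finType) (f : E -> R)
  (Ps : {set {set E}}) : R :=
  \big[Num.max/0]_(P in Ps) \prod_(e in P) f e.

Definition pexp (R : realType) (x : R) : R := expR (- x).

Definition prelec (R : realType) (alpha : R) (p : R) : R :=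
  expR (- ((- ln p) `^ alpha)).

Definition xtot (R : realType) (K E : finType) (xs : K -> E -> R) (e : E) : R :=
  \sum_(k : K) xs k e.

Definition cost (R : realType) (V E K : finType) (src tgt : E -> V) (vs : V)
  (w : R -> R) (Vk : {set V}) (L : V -> R) (xs : K -> E -> R) : R :=
  \sum_(m in Vk) L m * pathmax (fun e => w (pexp (xtot xs e))) (paths src tgt vs m).

Definition Cperc (R : realType) (V E K : finType) (src tgt : E -> V) (vs : V)
  (Vs : K -> {set V}) (L : V -> R) (alpha : K -> R) (k : K) (xs : K -> E -> R)
  : R := cost src tgt vs (prelec (alpha k)) (Vs k) L xs.

Definition Ctrue (R : realType) (V E K : finType) (src tgt : E -> V) (vs : V)
  (Vs : K -> {set V}) (L : V -> R) (k : K) (xs : K -> E -> R) : R :=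
  cost src tgt vs id (Vs k) L xs.

Definition Csoc (R : realType) (V E K : finType) (src tgt : E -> V) (vs : V)
  (Vs : K -> {set V}) (L : V -> R) (xs : K -> E -> R) : R :=
  \sum_(k : K) Ctrue src tgt vs Vs L k xs.

Definition inX (R : realType) (E : finType) (Bk : R) (y : E -> R) : Prop :=
  (forall e, 0 <= y e) /\ \sum_(e : E) y e <= Bk.

Definition upd (R : realType) (K E : finType) (xs : K -> E -> R) (k : K)
  (y : E -> R) : K -> E -> R :=
  fun j => if j == k then y else xs j.

Definition isNE (R : realType) (V E K : finType) (src tgt : E -> V) (vs : V)
  (Vs : K -> {set V}) (L : V -> R) (B alpha : K -> R) (xs : K -> E -> R)
  : Prop :=
  forall k, inX (B k) (xs k) /\
    forall y, inX (B k) y ->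
      Cperc src tgt vs Vs L alpha k xs <= Cperc src tgt vs Vs L alpha k (upd xs k y).

Definition inXsoc (R : realType) (K E : finType) (Btot : R) (xs : K -> E -> R)
  : Prop :=
  (forall k e, 0 <= xs k e) /\ \sum_(k : K) \sum_(e : E) xs k e <= Btot.

From HB Require Import structures.
From mathcomp Require Import all_boot all_order all_algebra.
From mathcomp Require Import all_classical all_reals all_analysis.
Set Implicit Arguments. Unset Strict Implicit. Unset Printing Implicit Defensive.
Import Order.TTheory GRing.Theory Num.Theory.
Local Open Scope ring_scope.

(* Every edge probability is exp(-x) <= 1, so any nonnegative profile, in
   particular an equilibrium, has true social cost at most the total loss
   S = sum_k sum_(m in V_k) L_m.
   Conversely a socially feasible profile spends at most B in all, hence at
   most B along any single path, so that path is attacked with probability at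
   least exp(-B) and the optimal social cost is at least exp(-B) S. *)

Section PathMax.
Variables (R : realDomainType) (E : finType) (f : E -> R) (Ps : {set {set E}}).

Lemma le_pathmax P : P \in Ps -> \prod_(e in P) f e <= pathmax f Ps.
Proof. exact: le_bigmax_cond. Qed.

Lemma pathmax_le1 : (forall e, 0 <= f e <= 1) -> pathmax f Ps <= 1.
Proof.
move=> f01; apply: bigmax_le => // P _.
by apply: prodr_ile1 => e _; exact: f01.
Qed.

End PathMax.

Lemma pexp_le1 (R : realType) (x : R) : 0 <= x -> 0 <= pexp x <= 1.
Proof. by move=> x0; rewrite expR_ge0 -expR0 ler_expR oppr_le0. Qed.

Lemma prod_pexp (R : realType) (E : finType) (P : {pred E}) (f : E -> R) :
  \prod_(e in P) pexp (f e) = pexp (\sum_(e in P) f e).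
Proof. by rewrite /pexp -big_enum -expR_sum sumrN big_enum. Qed.

Section Investments.
Variables (R : realType) (K E : finType) (xs : K -> E -> R).
Hypothesis xs_ge0 : forall k e, 0 <= xs k e.

Lemma xtot_ge0 e : 0 <= xtot xs e.
Proof. exact: sumr_ge0. Qed.

Lemma sum_xtot_le_total (P : {pred E}) :
  \sum_(e in P) xtot xs e <= \sum_(k : K) \sum_(e : E) xs k e.
Proof.
rewrite [X in _ <= X]exchange_big -/(\sum_e xtot xs e) /=.
by rewrite [X in _ <= X](bigID (mem P)) /= lerDl sumr_ge0 // => e _; exact: xtot_ge0.
Qed.

End Investments.

Section TrueCost.
Variables (R : realType) (V E K : finType) (src tgt : E -> V) (vs : V).
Variables (Vk : {set V}) (L : V -> R) (xs : K -> E -> R).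
Hypotheses (L_ge0 : forall m, 0 <= L m) (xs_ge0 : forall k e, 0 <= xs k e).

Lemma true_cost_le_losses : cost src tgt vs id Vk L xs <= \sum_(m in Vk) L m.
Proof.
apply: ler_sum => m _; apply: ler_piMr => //.
by apply: pathmax_le1 => e; exact/pexp_le1/xtot_ge0.
Qed.

Lemma true_cost_ge_losses (b : R) :
  \sum_(k : K) \sum_(e : E) xs k e <= b ->
  (forall m, m \in Vk -> paths src tgt vs m != finset.set0) ->
  expR (- b) * \sum_(m in Vk) L m <= cost src tgt vs id Vk L xs.
Proof.
move=> xs_le_b reach; rewrite mulr_sumr; apply: ler_sum => m /reach /set0Pn [P HP].
rewrite mulrC ler_wpM2l //; apply: le_trans _ (le_pathmax _ HP).
rewrite /= prod_pexp ler_expR lerN2.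
exact: le_trans (sum_xtot_le_total xs_ge0 _) xs_le_b.
Qed.

End TrueCost.

Lemma NE_ge0 (R : realType) (V E K : finType) (src tgt : E -> V) (vs : V)
  (Vs : K -> {set V}) (L : V -> R) (B alpha : K -> R) (xs : K -> E -> R) :
  isNE src tgt vs Vs L B alpha xs -> forall k e, 0 <= xs k e.
Proof. by move=> NE k; case: (NE k) => -[]. Qed.

(* When [c = 0] the ratio is [0] by the convention [x / 0 = 0]. *)
Lemma ratio_le_expR (R : realType) (a c S b : R) :
  0 <= S -> a <= S -> expR (- b) * S <= c -> a / c <= expR b.
Proof.
move=> S_ge0 a_le_S S_le_c.
have c_ge0 : 0 <= c by apply: le_trans _ S_le_c; rewrite mulr_ge0 ?expR_ge0.
have [->|c_neq0] := eqVneq c 0; first by rewrite invr0 mulr0 expR_ge0.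
rewrite ler_pdivrMr ?lt0r ?c_neq0 //; apply: le_trans a_le_S _.
rewrite -[S]mul1r -(expR0 R) -(subrr b) expRD -mulrA.
by rewrite mulrC [X in _ <= X]mulrC ler_wpM2r ?expR_ge0.
Qed.

Theorem proposition5 (R : realType) (V E K : finType) (src tgt : E -> V)
  (vs : V) (Vs : K -> {set V}) (L : V -> R) (B alpha : K -> R)
  (Hsimple : injective (fun e => (src e, tgt e)))
  (Hassets : forall k, vs \notin Vs k)
  (HL : forall m, 0 <= L m)
  (HB : forall k, 0 <= B k)
  (Halpha : forall k, 0 < alpha k <= 1)
  (Hreach : forall k m, m \in Vs k -> paths src tgt vs m != finset.set0)
  (xstar : K -> E -> R)
  (Hxstar : inXsoc (\sum_(k : K) B k) xstar)
  (Hopt : forall x : K -> E -> R, inXsoc (\sum_(k : K) B k) x ->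
     Csoc src tgt vs Vs L xstar <= Csoc src tgt vs Vs L x)
  (xbar : K -> E -> R)
  (HNE : isNE src tgt vs Vs L B alpha xbar) :
  Csoc src tgt vs Vs L xbar / Csoc src tgt vs Vs L xstar <= expR (\sum_(k : K) B k).
Proof.
have [xstar_ge0 xstar_le_B] := Hxstar.
apply: (@ratio_le_expR _ _ _ (\sum_k \sum_(m in Vs k) L m)).
- by apply: sumr_ge0 => k _; exact: sumr_ge0.
- apply: ler_sum => k _; exact: true_cost_le_losses HL (NE_ge0 HNE).
- rewrite /Csoc /Ctrue mulr_sumr; apply: ler_sum => k _.
  exact: (true_cost_ge_losses HL xstar_ge0 xstar_le_B (Hreach k)).
Qed.
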